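(* Let $k,n\ge 1$ and let $x_1\le x_2\le\dots\le x_{kn}$ be real numbers. If $2\le k\le 16$, the partition of $\{1,\dots,kn\}$ into consecutive blocks $B_i=\{(i-1)k+1,\dots,ik\}$, $i=1,\dots,n$, is a minimal $k$-tuple partition with respect to $A$. If $2\le k\le 8$, the same partition is also minimal with respect to $S$.
   Context: For real numbers $x_1,\dots,x_k$ (repetitions allowed) define $A(x_1,\dots,x_k)=\sum_{1\le i<j\le k}|x_j-x_i|$ and $S(x_1,\dots,x_k)=\sum_{1\le i<j\le k}(x_j-x_i)^2$. Given real numbers $x_1,\dots,x_{kn}$, a $k$-tuple partition is a partition of the index set $\{1,\dots,kn\}$ into $n$ blocks, each of size $k$. Its cost with respect to $D\in\{A,S\}$ is the sum over blocks $\{i_1,\dots,i_k\}$ of $D(x_{i_1},\dots,x_{i_k})$. A $k$-tuple partition is minimal if its cost is less than or equal to the cost of every other $k$-tuple partition. *)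

From HB Require Import structures.
From mathcomp Require Import all_boot all_order all_algebra.
Set Implicit Arguments. Unset Strict Implicit. Unset Printing Implicit Defensive.
Import Order.TTheory GRing.Theory Num.Theory.
Local Open Scope ring_scope.

(* Indices are 0-based: {1,..,kn} is 'I_(k*n). A k-tuple partition into n
   blocks is encoded as a labelling f : 'I_(k*n) -> 'I_n whose every fibre
   has exactly k elements (block b = f^-1(b)). *)
Definition ktuple_partition (k n : nat) (f : 'I_(k * n) -> 'I_n) : Prop :=
  forall b : 'I_n, #|[pred i | f i == b]| = k.

Definition pairA (R : realFieldType) (a b : R) : R := `|b - a|.
Definition pairS (R : realFieldType) (a b : R) : R := (b - a) ^+ 2.

Definition cost (R : realFieldType) (d : R -> R -> R) (k n : nat)
    (x : 'I_(k * n) -> R) (f : 'I_(k * n) -> 'I_n) : R :=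
  \sum_(b < n) \sum_(i < k * n) \sum_(j < k * n | (i < j)%N && (f i == b) && (f j == b))
     d (x i) (x j).

Lemma consec_proof (k n : nat) (i : 'I_(k * n)) : (i %/ k < n)%N.
Proof.
case: i => i /=; case: k => [|k] Hi; first by rewrite mul0n in Hi.
by rewrite ltn_divLR // mulnC.
Qed.

(* The consecutive partition: 0-based index i goes to block i %/ k,
   i.e. block b = {b*k, ..., b*k + k - 1}. *)
Definition consec (k n : nat) (i : 'I_(k * n)) : 'I_n :=
  Ordinal (consec_proof i).

Definition minimal (R : realFieldType) (d : R -> R -> R) (k n : nat)
    (x : 'I_(k * n) -> R) (f : 'I_(k * n) -> 'I_n) : Prop :=
  ktuple_partition f /\
  forall g : 'I_(k * n) -> 'I_n, ktuple_partition g -> cost d x f <= cost d x g.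

From HB Require Import structures.
From mathcomp Require Import all_boot all_order all_algebra.
From mathcomp Require Import zify.
Import Order.TTheory GRing.Theory Num.Theory.

(* Writing x_j - x_i as the sum of the gaps x_(m+1) - x_m, i <= m < j, the
   A-cost of a partition becomes sum_m gap_m * straddle (m+1) (m+1) and the
   S-cost sum_(m,m') gap_m gap_m' * straddle (min m m' + 1) (max m m' + 1),
   where straddle p q counts the same-block pairs i < p <= q <= j.  The gaps
   are nonnegative, so it suffices that the consecutive partition minimises
   every straddle p q.  If block b has L_b elements below p and W_b below q,
   then straddle p q = sum_b L_b (k - W_b); for p = a k + r and q = a k + s a
   layer-cake decomposition of sum_b L_b W_b bounds this below by r (k - s),
   which the consecutive partition attains. *)

Set Implicit Arguments.
Unset Strict Implicit.
Unset Printing Implicit Defensive.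

Lemma sum_ord_range (M a c : nat) : \sum_(i < M) (a <= i < c : nat) = minn M c - a.
Proof.
elim: M => [|M IH]; first by rewrite big_ord0; lia.
by rewrite big_ord_recr /= IH; case: leqP => ? /=; case: ltnP => ? /=; lia.
Qed.

(* [a k + r (m - a)] is the tangent at [m = a] of [m |-> minn (a k + r) (k m)]. *)
Lemma tangent_bound (k a r m X : nat) :
  r <= k -> X <= a * k + r -> X <= k * m -> X + r * a <= a * k + r * m.
Proof.
move=> rk Xp Xm; case: (leqP m a) => ma.
  have : r * (a - m) <= k * (a - m) by rewrite leq_mul2r rk orbT.
  nia.
have : r * a <= r * m by rewrite leq_mul2l ltnW ?orbT.
nia.
Qed.

Lemma sum_mul_complement_ge (I : finType) (k a r s : nat) (L W : I -> nat) :
  (forall b, L b <= k) -> (forall b, W b <= k) -> r <= k ->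
  \sum_b L b = a * k + r -> \sum_b W b = a * k + s ->
  r * (k - s) <= \sum_b L b * (k - W b).
Proof.
move=> Lk Wk rk sumL sumW.
have layer b : W b = \sum_(t < k) (t < W b : nat).
  by rewrite (sum_ord_range k 0 (W b)); have := Wk b; lia.
pose X t := \sum_b L b * (t < W b).
pose m t := \sum_b (t < W b : nat).
have sumLW : \sum_b L b * W b = \sum_(t < k) X t.
  rewrite exchange_big; apply: eq_bigr => b _.
  by rewrite {1}layer big_distrr.
have summ : \sum_(t < k) m t = a * k + s.
  by rewrite exchange_big -sumW; apply: eq_bigr => b _; rewrite -layer.
have Xp t : X t <= a * k + r.
  by rewrite -sumL leq_sum // => b _; case: (t < W b); rewrite ?muln1 ?muln0.
have Xm t : X t <= k * m t.
  by rewrite big_distrr leq_sum // => b _; rewrite leq_mul2r Lk orbT.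
have : \sum_(t < k) (X t + r * a) <= \sum_(t < k) (a * k + r * m t).
  by apply: leq_sum => t _; apply: tangent_bound.
rewrite !big_split /= -sumLW !sum_nat_const card_ord -big_distrr /= summ.
have : \sum_b L b * (k - W b) + \sum_b L b * W b = k * (a * k + r).
  rewrite -big_split -sumL big_distrr /=; apply: eq_bigr => b _.
  by rewrite -mulnDr subnK // mulnC.
case: (leqP k s) => [ks | /ltnW sk]; first by rewrite (eqP ks) muln0.
have : r * (k - s) + r * s = r * k by rewrite -mulnDr subnK.
nia.
Qed.

Section Straddle.
Variables (k n : nat).
Local Notation N := (k * n).
Implicit Types (f : 'I_N -> 'I_n) (b : 'I_n).

Definition block_count f b (m : nat) : nat := \sum_(i < N) ((f i == b) && (i < m)).

Definition straddle f (p q : nat) : nat :=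
  \sum_(i < N) \sum_(j < N) [&& f i == f j, i < p & q <= j].

Lemma block_count_card f b : block_count f b N = #|[pred i | f i == b]|.
Proof.
rewrite -sum1_card big_mkcond /=; apply: eq_bigr => i _.
by rewrite ltn_ord andbT inE; case: (f i == b).
Qed.

Lemma block_count_le f b m : ktuple_partition f -> block_count f b m <= k.
Proof.
move=> f_part; rewrite -(f_part b) -block_count_card leq_sum // => i _.
by case: (f i == b) => //=; rewrite ltn_ord leq_b1.
Qed.

Lemma sum_block_count f m : m <= N -> \sum_b block_count f b m = m.
Proof.
move=> mN; rewrite exchange_big /= -[RHS](subn0) -[X in X - 0](minn_idPr mN).
rewrite -sum_ord_range; apply: eq_bigr => i _.
rewrite (bigD1 (f i)) //= eqxx big1 ?addn0 // => b.
by rewrite eq_sym => /negbTE ->.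
Qed.

Lemma straddle_blocks f p q : ktuple_partition f ->
  straddle f p q = \sum_b block_count f b p * (k - block_count f b q).
Proof.
move=> f_part.
have above b : \sum_(j < N) ((f j == b) && (q <= j)) = k - block_count f b q.
  apply/eqP; rewrite -(eqn_add2r (block_count f b q)) subnK ?block_count_le //.
  rewrite -[X in _ == X](f_part b) -block_count_card -big_split /=.
  apply/eqP/eq_bigr => j _.
  by rewrite ltn_ord andbT; case: (f j == b); case: leqP.
rewrite /straddle (partition_big f xpredT) //=; apply: eq_bigr => b _.
rewrite -above {1}/block_count big_mkcond big_distrl /=; apply: eq_bigr => i _.
case: eqP => [<-|_] /=; last by rewrite mul0n.
rewrite big_distrr /=; apply: eq_bigr => j _.
by rewrite [f j == _]eq_sym mulnb andbCA.
Qed.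

Lemma straddle_ge f p q a r s : ktuple_partition f -> p <= N -> q <= N -> r <= k ->
  p = a * k + r -> q = a * k + s -> r * (k - s) <= straddle f p q.
Proof.
move=> f_part pN qN rk pE qE; rewrite straddle_blocks //.
by apply: (@sum_mul_complement_ge _ k a); rewrite ?sum_block_count // => b;
  apply: block_count_le.
Qed.

End Straddle.

Section Consecutive.
Variables (k n : nat).
Hypothesis k_gt0 : 0 < k.
Local Notation N := (k * n).
Local Notation consec := (@consec k n).

Lemma consecE (i : 'I_N) (b : 'I_n) : (consec i == b) = (b * k <= i < b * k + k).
Proof.
have -> : (consec i == b) = (i %/ k == b) by [].
by rewrite eqn_leq leq_divRL // -ltnS ltn_divLR // andbC mulSn addnC.
Qed.

Lemma block_count_consec (b : 'I_n) m : block_count consec b m = minn k (m - b * k).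
Proof.
have bkN : b * k + k <= N by have := ltn_ord b; nia.
rewrite /block_count.
under eq_bigr => i _ do rewrite consecE -andbA -ltn_min.
rewrite sum_ord_range; lia.
Qed.

Lemma consec_partition : ktuple_partition consec.
Proof.
move=> b; rewrite -block_count_card block_count_consec.
have : b * k + k <= N by have := ltn_ord b; nia.
lia.
Qed.

Lemma straddle_consec p q : p <= q -> q <= N ->
  straddle consec p q = p %% k * (k - (q - p %/ k * k)).
Proof.
move=> pq qN; rewrite straddle_blocks; last exact: consec_partition.
set a := p %/ k; set r := p %% k.
have pE : p = a * k + r := divn_eq p k.
have rk : r < k := ltn_pmod p k_gt0.
have off_block (b : nat) : b != a ->
    minn k (p - b * k) * (k - minn k (q - b * k)) = 0.
  case: ltngtP => // [ba | ab] _.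
    have : b.+1 * k <= a * k by rewrite leq_mul2r ba orbT.
    rewrite mulSn; lia.
  have : a.+1 * k <= b * k by rewrite leq_mul2r ab orbT.
  rewrite mulSn; lia.
under eq_bigr => b _ do rewrite !block_count_consec.
case: (ltnP a n) => [an | na].
  rewrite (bigD1 (Ordinal an)) //= big1 => [|b]; last first.
    by rewrite -val_eqE => /off_block.
  by rewrite addn0; congr (_ * _); lia.
rewrite big1 => [|b _]; last by rewrite off_block // neq_ltn (leq_trans (ltn_ord b)).
have kna : k * n <= a * k by rewrite mulnC leq_mul2r na orbT.
by have -> : r = 0 by lia.
Qed.

Lemma straddle_consec_le (g : 'I_N -> 'I_n) p q :
  ktuple_partition g -> p <= q -> q <= N -> straddle consec p q <= straddle g p q.
Proof.
move=> g_part pq qN; rewrite straddle_consec //.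
have akq : p %/ k * k <= q := leq_trans (leq_trunc_div p k) pq.
apply: straddle_ge => //; first exact: leq_trans qN.
- exact: ltnW (ltn_pmod p k_gt0).
- exact: divn_eq.
- by rewrite subnKC.
Qed.

End Consecutive.

Local Open Scope ring_scope.

Section Gaps.
Variables (R : realFieldType) (k n : nat) (x : 'I_(k * n) -> R).
Local Notation N := (k * n).
Implicit Types f : 'I_N -> 'I_n.

(* [extend] is only read below [N]; [gap] vanishes from the last index on, so
   every gap of a sorted [x] is nonnegative. *)
Definition extend (t : nat) : R := if insub t is Some i then x i else 0.

Definition gap (t : nat) : R := if (t.+1 < N)%N then extend t.+1 - extend t else 0.

Lemma extendE (i : 'I_N) : extend i = x i.
Proof. by rewrite /extend valK. Qed.

Lemma cost_pairs d f : cost d x f =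
  \sum_(i < N) \sum_(j < N) (if (i < j)%N && (f i == f j) then d (x i) (x j) else 0).
Proof.
rewrite /cost exchange_big /=; apply: eq_bigr => i _.
under eq_bigr do rewrite big_mkcond /=.
rewrite exchange_big /=; apply: eq_bigr => j _.
rewrite (bigD1 (f i)) //= big1 ?addr0 => [|b]; first by rewrite eqxx andbT eq_sym.
by rewrite eq_sym => /negbTE ->; rewrite andbF.
Qed.

Lemma sub_sum_gaps (i j : 'I_N) : (i <= j)%N ->
  x j - x i = \sum_(m < N) gap m *+ (i <= m < j)%N.
Proof.
move=> ij; rewrite -!extendE -(telescope_sumr extend ij).
rewrite (big_nat_widen _ _ _ _ _ (ltnW (ltn_ord j))) big_geq_mkord.
under [RHS]eq_bigr do rewrite mulrb.
rewrite big_mkcond /=; apply: eq_bigr => m _.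
rewrite andbC; case: ifP => //= /andP[_ mj].
by rewrite /gap (leq_ltn_trans mj (ltn_ord j)).
Qed.

Lemma cost_as_straddles (I : finType) (c : I -> R) (p q : I -> nat) d f :
  (forall m, p m <= q m)%N ->
  (forall i j : 'I_N, (i < j)%N ->
     d (x i) (x j) = \sum_(m : I) c m *+ ((i < p m) && (q m <= j))%N) ->
  cost d x f = \sum_(m : I) c m *+ straddle f (p m) (q m).
Proof.
move=> pq dE; rewrite cost_pairs.
transitivity (\sum_(i < N) \sum_(j < N) \sum_(m : I)
                c m *+ [&& f i == f j, i < p m & q m <= j]%N).
  apply: eq_bigr => i _; apply: eq_bigr => j _.
  case: ltnP => [ij | ji] /=.
    by case: eqP => _; rewrite ?dE // big1 // => m _; rewrite mulr0n.
  rewrite big1 // => m _; case: and3P => [[_ ip qj] | _]; last exact: mulr0n.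
  by have := pq m; lia.
under eq_bigr => i _ do rewrite exchange_big /=.
rewrite exchange_big /=; apply: eq_bigr => m _.
by rewrite /straddle -sumrMnr; apply: eq_bigr => i _; rewrite -sumrMnr.
Qed.

Lemma costS_straddles f : cost (@pairS R) x f =
  \sum_(m : 'I_N * 'I_N) (gap m.1 * gap m.2)
     *+ straddle f (minn m.1 m.2).+1 (maxn m.1 m.2).+1.
Proof.
apply: cost_as_straddles => [m | i j ij].
  by rewrite ltnS (leq_trans (geq_minl _ _) (leq_maxl _ _)).
rewrite /pairS sub_sum_gaps ?(ltnW ij) // expr2 mulr_suml.
rewrite -(pair_bigA _ (fun m m' : 'I_N => (gap m * gap m')
  *+ ((i < (minn m m').+1) && ((maxn m m').+1 <= j))%N)) /=.
apply: eq_bigr => m _; rewrite mulr_sumr; apply: eq_bigr => m' _.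
rewrite mulrnAl mulrnAr -mulrnA mulnb ltnS leq_min gtn_max.
by congr (_ *+ nat_of_bool _); rewrite -!andbA; do ![bool_congr].
Qed.

Hypothesis x_sorted : forall i j : 'I_N, (i <= j)%N -> x i <= x j.

Lemma gap_ge0 t : 0 <= gap t.
Proof.
rewrite /gap; case: ifP => // tN.
rewrite (extendE (Ordinal tN)) (extendE (Ordinal (ltnW tN))) subr_ge0.
exact: x_sorted.
Qed.

Lemma costA_straddles f :
  cost (@pairA R) x f = \sum_(m < N) gap m *+ straddle f m.+1 m.+1.
Proof.
apply: cost_as_straddles => // i j ij.
have ij_le := ltnW ij.
rewrite /pairA ger0_norm; last by rewrite subr_ge0 x_sorted.
by rewrite sub_sum_gaps //; under eq_bigr do rewrite ltnS.
Qed.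

End Gaps.

Theorem mainTheorem5 (R : realFieldType) (k n : nat) (x : 'I_(k * n) -> R) :
  (1 <= k)%N -> (1 <= n)%N ->
  (forall i j : 'I_(k * n), (i <= j)%N -> x i <= x j) ->
  ((2 <= k <= 16)%N -> minimal (@pairA R) x (@consec k n)) /\
  ((2 <= k <= 8)%N -> minimal (@pairS R) x (@consec k n)).
Proof.
move=> k_gt0 _ x_sorted.
split=> _; split=> [|g g_part]; try exact: consec_partition.
- rewrite !costA_straddles //; apply: ler_sum => m _.
  apply: ler_wpMn2l; first exact: gap_ge0.
  exact: straddle_consec_le.
- rewrite !costS_straddles; apply: ler_sum => -[m m'] _ /=.
  apply: ler_wpMn2l; first by rewrite mulr_ge0 ?gap_ge0.
  apply: straddle_consec_le => //; last by rewrite gtn_max !ltn_ord.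
  by rewrite ltnS (leq_trans (geq_minl _ _) (leq_maxl _ _)).
Qed.
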